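(* Let $V=[n]$, let $F:2^V\to\mathbb{R}$ be a submodular set function, $Z=\sum_{S\subseteq V}\exp(F(S))$, and for $x\in(0,1)^n$ let $$\mathrm{KL}(x)=-\sum_{S\subseteq V}\prod_{i\in S}x_i\prod_{j\notin S}(1-x_j)\,F(S)+\sum_{i=1}^n\big[x_i\log x_i+(1-x_i)\log(1-x_i)\big]+\log Z.$$ Then $\mathrm{KL}$ is DR-supermodular on $(0,1)^n$.
   Context: A function $h$ on a product of intervals is DR-submodular if for all $a\le b$ (componentwise) in its domain, all $i\in[n]$, and all $k\ge0$ with $a+ke_i,b+ke_i$ in the domain, $h(a+ke_i)-h(a)\ge h(b+ke_i)-h(b)$; $h$ is DR-supermodular if $-h$ is DR-submodular. $F$ submodular means $F(A)+F(B)\ge F(A\cup B)+F(A\cap B)$ for all $A,B\subseteq V$. *)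

From Stdlib Require Import Reals.
From mathcomp Require Import all_boot.
Set Implicit Arguments. Unset Strict Implicit.
Open Scope R_scope.

Definition submodular (n : nat) (F : {set 'I_n} -> R) : Prop :=
  forall A B : {set 'I_n}, F (A :|: B) + F (A :&: B) <= F A + F B.

Definition add_coord (n : nat) (a : 'I_n -> R) (i : 'I_n) (k : R) : 'I_n -> R :=
  fun j => a j + (if j == i then k else 0).

Definition le_vec (n : nat) (a b : 'I_n -> R) : Prop := forall j, a j <= b j.

Definition DR_submodular (n : nat) (D : ('I_n -> R) -> Prop) (h : ('I_n -> R) -> R) : Prop :=
  forall (a b : 'I_n -> R) (i : 'I_n) (k : R),
    D a -> D b -> le_vec a b -> 0 <= k ->
    D (add_coord a i k) -> D (add_coord b i k) ->
    h (add_coord b i k) - h b <= h (add_coord a i k) - h a.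

Definition DR_supermodular (n : nat) (D : ('I_n -> R) -> Prop) (h : ('I_n -> R) -> R) : Prop :=
  DR_submodular D (fun x => - h x).

Definition open_cube (n : nat) (x : 'I_n -> R) : Prop := forall i, 0 < x i < 1.

Definition logZ (n : nat) (F : {set 'I_n} -> R) : R :=
  ln (\big[Rplus/0]_(S : {set 'I_n}) exp (F S)).

Definition KL (n : nat) (F : {set 'I_n} -> R) (x : 'I_n -> R) : R :=
  - (\big[Rplus/0]_(S : {set 'I_n})
        ((\big[Rmult/1]_(i in S) x i) * (\big[Rmult/1]_(j in ~: S) (1 - x j)) * F S))
  + \big[Rplus/0]_(i < n) (x i * ln (x i) + (1 - x i) * ln (1 - x i))
  + logZ F.

(* Write KL x = - f x + sum_i h (x i) + log Z, with f the multilinear extension of F and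
   h t = t ln t + (1 - t) ln (1 - t).  Since h is convex, the increments of the separable
   part grow with x.  For the other part, f (x + k e_i) - f x is k times the multilinear
   extension of the marginal gain S |-> F (S + i) - F (S - i); by submodularity this gain
   is antitone in S, so its multilinear extension is antitone in x, and the increments of
   - f grow with x as well. *)

From Stdlib Require Import Reals Lra.
From HB Require Import structures.
From mathcomp Require Import all_boot.
Set Implicit Arguments. Unset Strict Implicit.
Open Scope R_scope.

Lemma xlnx_tangent u v : 0 < u -> 0 < v ->
  v * ln v + (ln v + 1) * (u - v) <= u * ln u.
Proof.
move=> hu hv.
have ln_ratio : ln (v / u) = ln v - ln u.
  by rewrite /Rdiv ln_mult ?ln_Rinv //; apply: Rinv_0_lt_compat.
(* ln (v/u) <= v/u - 1, multiplied by u *)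
have := exp_ineq1_le (ln (v / u)).
rewrite exp_ln; last by apply: Rdiv_lt_0_compat.
rewrite ln_ratio => h.
have : u * (1 + (ln v - ln u)) <= u * (v / u) by apply: Rmult_le_compat_l; lra.
have -> : u * (v / u) = v by field; lra.
nra.
Qed.

Definition convex_on (I : R -> Prop) (f : R -> R) : Prop :=
  forall u v l, I u -> I v -> 0 <= l <= 1 ->
    f (l * u + (1 - l) * v) <= l * f u + (1 - l) * f v.

Lemma convex_on_of_tangent (I : R -> Prop) (f df : R -> R) :
  (forall u v l, I u -> I v -> 0 <= l <= 1 -> I (l * u + (1 - l) * v)) ->
  (forall u v, I u -> I v -> f v + df v * (u - v) <= f u) ->
  convex_on I f.
Proof.
move=> Iconv tangent u v l Iu Iv hl.
set m := l * u + (1 - l) * v.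
have Im : I m by apply: Iconv.
have hu := tangent u m Iu Im; have hv := tangent v m Iv Im.
have : l * (f m + df m * (u - m)) + (1 - l) * (f m + df m * (v - m)) = f m
  by rewrite /m; ring.
nra.
Qed.

(* Both inner points a + k and b are convex combinations of a and b + k. *)
Lemma convex_on_increments (I : R -> Prop) f a b k :
  convex_on I f -> I a -> I (b + k) -> a <= b -> 0 <= k ->
  f (a + k) - f a <= f (b + k) - f b.
Proof.
move=> fconv Ia Ibk hab hk.
have [->|hne] := Req_dec a b; first lra.
set L := b + k - a; have hL : 0 < L by rewrite /L; lra.
set l := k / L.
have hl : 0 <= l <= 1.
  have : l * L = k by rewrite /l; field; lra.
  rewrite /L in hL * => ?; nra.
have eb : b = l * a + (1 - l) * (b + k) by rewrite /l /L; field; lra.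
have eak : a + k = (1 - l) * a + (1 - (1 - l)) * (b + k) by rewrite /l /L; field; lra.
have := fconv _ _ _ Ia Ibk hl; rewrite -eb.
have := fconv _ _ (1 - l) Ia Ibk ltac:(lra); rewrite -eak.
lra.
Qed.

Definition binent (x : R) : R := x * ln x + (1 - x) * ln (1 - x).

Definition unit_interval (x : R) : Prop := 0 < x < 1.

Lemma binent_convex : convex_on unit_interval binent.
Proof.
apply: (@convex_on_of_tangent _ _ (fun v => ln v - ln (1 - v))).
- rewrite /unit_interval => u v l hu hv hl.
  have : 0 <= l * u /\ 0 <= (1 - l) * v by split; apply: Rmult_le_pos; lra.
  have : 0 <= l * (1 - u) /\ 0 <= (1 - l) * (1 - v) by split; apply: Rmult_le_pos; lra.
  have [->|hl0] := Req_dec l 0; first lra.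
  have : 0 < l * u /\ 0 < l * (1 - u) by split; apply: Rmult_lt_0_compat; lra.
  nra.
- rewrite /unit_interval /binent => u v hu hv.
  have := @xlnx_tangent u v ltac:(lra) ltac:(lra).
  have := @xlnx_tangent (1 - u) (1 - v) ltac:(lra) ltac:(lra).
  nra.
Qed.

HB.instance Definition _ := Monoid.isComLaw.Build R 0 Rplus
  (fun a b c => esym (Rplus_assoc a b c)) Rplus_comm Rplus_0_l.
HB.instance Definition _ := Monoid.isComLaw.Build R 1 Rmult
  (fun a b c => esym (Rmult_assoc a b c)) Rmult_comm Rmult_1_l.

Lemma big_setU1_notin (V : Type) (idx : V) (op : Monoid.com_law idx)
    (T : finType) (j : T) (f : {set T} -> V) :
  \big[op/idx]_(S : {set T}) f S =
  \big[op/idx]_(S : {set T} | j \notin S) op (f (j |: S)) (f S).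
Proof.
rewrite (bigID (fun S : {set T} => j \in S)) big_split /=; congr (op _ _).
rewrite (reindex_onto (fun S => j |: S) (fun S => S :\ j)) /=; last exact: setD1K.
apply: eq_bigl => S; rewrite setU11 /=.
by apply/eqP/idP => [<-|/setU1K //]; rewrite setD11.
Qed.

Section MultilinearExtension.
Variable n : nat.
Implicit Types (i j : 'I_n) (x y a b : 'I_n -> R) (S : {set 'I_n}) (G : {set 'I_n} -> R).

Definition upd x j (t : R) : 'I_n -> R := fun i => if i == j then t else x i.

Lemma antitone_of_coord_antitone (I : R -> Prop) (f : ('I_n -> R) -> R) :
  (forall x y, (forall i, x i = y i) -> f x = f y) ->
  (forall x j t t', (forall i, I (x i)) -> I t -> I t' -> t <= t' ->
     f (upd x j t') <= f (upd x j t)) ->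
  forall a b, (forall i, I (a i)) -> (forall i, I (b i)) -> (forall i, a i <= b i) ->
  f b <= f a.
Proof.
move=> f_ext coord a b Ia Ib hab.
pose c m i := if (i < m)%N then b i else a i.
have Ic m i : I (c m i) by rewrite /c; case: ifP.
have c_step m : f (c m.+1) <= f (c m).
  have [hm|hm] := ltnP m n; last first.
    rewrite (@f_ext (c m.+1) (c m)); first exact: Rle_refl.
    by move=> i; rewrite /c (leq_trans (ltn_ord i) hm) (leq_trans (ltn_ord i) (leqW hm)).
  pose j := Ordinal hm.
  have -> : f (c m.+1) = f (upd (c m) j (b j)).
    apply: f_ext => i; rewrite /c /upd ltnS leq_eqVlt.
    have [->|hij] := eqVneq i j; first by rewrite eqxx.
    suff -> : (i == m :> nat) = false by [].
    by apply/negbTE; apply: contra hij => /eqP im; apply/eqP/val_inj.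
  have -> : f (c m) = f (upd (c m) j (a j)).
    apply: f_ext => i; rewrite /c /upd.
    by have [->|//] := eqVneq i j; rewrite /= ltnn.
  exact: coord.
have c_le m : f (c m) <= f a.
  elim: m => [|m IH]; last exact: Rle_trans (c_step m) IH.
  by rewrite (@f_ext (c 0%N) a); [apply: Rle_refl | ].
rewrite (@f_ext b (c n)) => [|i]; first exact: c_le.
by rewrite /c ltn_ord.
Qed.

(* mlext G x is the multilinear extension of G: the expectation of G S when S contains
   each i independently with probability x i. *)
Definition mlweight S x : R := \big[Rmult/1]_i (if i \in S then x i else 1 - x i).

Definition mlweight_except S x j : R :=
  \big[Rmult/1]_(i | i != j) (if i \in S then x i else 1 - x i).

Definition mlext G x : R := \big[Rplus/0]_S (mlweight S x * G S).

Lemma mlweightE S x :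
  (\big[Rmult/1]_(i in S) x i) * (\big[Rmult/1]_(i in ~: S) (1 - x i)) = mlweight S x.
Proof.
rewrite /mlweight [RHS](bigID (mem S)) /=; congr (_ * _).
  by apply: eq_bigr => i ->.
by apply: eq_big => [i|i]; rewrite in_setC // => /negbTE ->.
Qed.

Lemma mlweight_split S x j :
  mlweight S x = (if j \in S then x j else 1 - x j) * mlweight_except S x j.
Proof. by rewrite /mlweight (bigD1 j). Qed.

Lemma mlweight_except_setU1 S x j : mlweight_except (j |: S) x j = mlweight_except S x j.
Proof. by apply: eq_bigr => i /negbTE ij; rewrite in_setU1 ij. Qed.

Lemma eq_mlweight_except S x y j : (forall i, i != j -> x i = y i) ->
  mlweight_except S x j = mlweight_except S y j.
Proof. by move=> xy; apply: eq_bigr => i /xy ->. Qed.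

Lemma mlweight_except_upd S x j t : mlweight_except S (upd x j t) j = mlweight_except S x j.
Proof. by apply: eq_mlweight_except => i /negbTE ij; rewrite /upd ij. Qed.

Lemma mlweight_except_ge0 S x j : (forall i, 0 <= x i <= 1) -> 0 <= mlweight_except S x j.
Proof.
move=> x01; apply: (big_ind (fun v => 0 <= v)) => [|u v|i _]; first lra.
  exact: Rmult_le_pos.
by case: (i \in S); move: (x01 i); lra.
Qed.

(* Grouping S with j |: S exhibits mlext as affine in the coordinate x j. *)
Lemma mlext_split G x j : mlext G x =
  \big[Rplus/0]_(S : {set 'I_n} | j \notin S)
     (mlweight_except S x j * (x j * G (j |: S) + (1 - x j) * G S)).
Proof.
rewrite /mlext (big_setU1_notin _ j) /=; apply: eq_bigr => S /negbTE jS.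
by rewrite !(mlweight_split _ _ j) setU11 jS mlweight_except_setU1; ring.
Qed.

Lemma eq_mlext G x y : (forall i, x i = y i) -> mlext G x = mlext G y.
Proof.
by move=> xy; apply: eq_bigr => S _; congr (_ * _); apply: eq_bigr => i _; rewrite xy.
Qed.

Definition set_antitone G : Prop := forall S S', S \subset S' -> G S' <= G S.

Lemma mlext_upd_antitone G x j t t' : set_antitone G -> (forall i, 0 <= x i <= 1) ->
  0 <= t -> t <= t' -> t' <= 1 -> mlext G (upd x j t') <= mlext G (upd x j t).
Proof.
move=> G_anti x01 ht htt' ht'; rewrite !(mlext_split _ _ j).
apply: (big_ind2 (fun u v => u <= v)) => [|u1 u2 v1 v2|S _]; first lra.
  exact: Rplus_le_compat.
rewrite !mlweight_except_upd /upd eqxx.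
have gain : G (j |: S) <= G S by apply/G_anti/subsetUr.
have : 0 <= (t' - t) * (G S - G (j |: S)) by apply: Rmult_le_pos; lra.
move/(Rmult_le_pos _ _ (mlweight_except_ge0 S j x01)).
nra.
Qed.

Lemma mlext_antitone G a b : set_antitone G ->
  (forall i, 0 <= a i <= 1) -> (forall i, 0 <= b i <= 1) -> (forall i, a i <= b i) ->
  mlext G b <= mlext G a.
Proof.
move=> G_anti; apply: (@antitone_of_coord_antitone (fun t => 0 <= t <= 1)).
  exact: eq_mlext.
move=> x j t t' x01 t01 t'01 htt'.
apply: mlext_upd_antitone => //; lra.
Qed.

Lemma mlextZ G x k : mlext (fun S => k * G S) x = k * mlext G x.
Proof. by rewrite /mlext; elim/big_rec2: _ => [|S u v _ ->]; ring. Qed.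

Definition marginal G j S : R := G (j |: S) - G (S :\ j).

(* marginal G j S does not depend on whether j is in S, so coordinate j can be set to any
   value on the right; 0 is chosen. *)
Lemma mlext_add_coord G x j k :
  mlext G (add_coord x j k) = mlext G x + k * mlext (marginal G j) (upd x j 0).
Proof.
rewrite -mlextZ !(mlext_split _ _ j) -big_split /=.
apply: eq_bigr => S /negbTE jS.
have -> : mlweight_except S (add_coord x j k) j = mlweight_except S x j.
  by apply: eq_mlweight_except => i /negbTE ij; rewrite /add_coord ij Rplus_0_r.
have S_minus_j : S :\ j = S.
  by apply/setP => i; rewrite !inE; case: eqP => // ->; rewrite jS.
rewrite mlweight_except_upd /upd /add_coord /marginal eqxx setU1K ?jS // S_minus_j.
ring.
Qed.

Lemma submodular_marginal_antitone G j : submodular G -> set_antitone (marginal G j).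
Proof.
move=> G_sub S S' SS'; rewrite /marginal.
have := G_sub (j |: S) (S' :\ j).
have -> : (j |: S) :|: (S' :\ j) = j |: S'.
  apply/setP => i; rewrite !inE; move: (subsetP SS' i).
  by case: (i \in S); case: (i \in S'); case: (i == j) => //= ->.
have -> : (j |: S) :&: (S' :\ j) = S :\ j.
  apply/setP => i; rewrite !inE; move: (subsetP SS' i).
  by case: (i \in S); case: (i \in S'); case: (i == j) => //= ->.
lra.
Qed.

Lemma big_add_coord (g : R -> R) x j k :
  \big[Rplus/0]_(i < n) g (add_coord x j k i) =
  \big[Rplus/0]_(i < n) g (x i) + (g (x j + k) - g (x j)).
Proof.
rewrite (bigD1 j) // [in RHS](bigD1 j) //= /add_coord eqxx.
rewrite (eq_bigr (fun i => g (x i))) => [|i /negbTE ->]; last by rewrite Rplus_0_r.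
lra.
Qed.

End MultilinearExtension.

Lemma KL_mlext n (F : {set 'I_n} -> R) x :
  KL F x = - mlext F x + \big[Rplus/0]_(i < n) binent (x i) + logZ F.
Proof.
rewrite /KL /mlext; congr (- _ + _ + _).
by apply: eq_bigr => S _; rewrite mlweightE.
Qed.

Theorem mainTheorem14 (n : nat) (F : {set 'I_n} -> R) :
  submodular F -> DR_supermodular (@open_cube n) (KL F).
Proof.
move=> F_sub a b i k a01 b01 ab k_ge0 _ bk01.
rewrite !KL_mlext !mlext_add_coord !big_add_coord.
have box x : open_cube x -> forall j, 0 <= upd x i 0 j <= 1.
  by move=> x01 j; rewrite /upd; case: (j == i); [lra | move: (x01 j); lra].
have marginal_le : mlext (marginal F i) (upd b i 0) <= mlext (marginal F i) (upd a i 0).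
  apply: mlext_antitone (submodular_marginal_antitone i F_sub) (box _ a01) (box _ b01) _.
  by move=> j; rewrite /upd; case: (j == i); [lra | apply: ab].
have entropy_le : binent (a i + k) - binent (a i) <= binent (b i + k) - binent (b i).
  apply: (convex_on_increments binent_convex (a01 i) _ (ab i) k_ge0).
  by have := bk01 i; rewrite /add_coord eqxx.
have := Rmult_le_compat_l _ _ _ k_ge0 marginal_le.
lra.
Qed.
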